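(* Let $h,m$ be positive integers with $h=1$ or $\omega(m)=1$, and let $c$ be a positive integer such that no $\mathrm{CC}^h[m]$-circuit computes the $n$-ary conjunction $\mathrm{AND}_n$ for any $n>c$. Then every non-constant Boolean function computable by a $\mathrm{CC}^h[m]$-circuit has balance at least $2^{1-c}$.
   Context: For an integer $m\ge 1$ and $A\subseteq\{0,\dots,m-1\}$, a gate $\mathrm{MOD}_m^A$ takes finitely many Boolean inputs (counted with multiplicity) and outputs $1$ if their sum modulo $m$ lies in $A$, and $0$ otherwise. A $\mathrm{CC}^h[m]$-circuit is a depth-$h$ Boolean circuit all of whose gates are of the form $\mathrm{MOD}_m^A$ ($A$ may vary between gates), with Boolean variable inputs (constants allowed) and multiple wires allowed. $\omega(m)$ is the number of distinct prime divisors of $m$. The balance of an $n$-ary Boolean function $f$ is $\mathrm{bal}(f)=1-\frac{\big||f^{-1}(0)|-|f^{-1}(1)|\big|}{2^n}$. *)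

From mathcomp Require Import all_boot all_order all_algebra.
Set Implicit Arguments. Unset Strict Implicit. Unset Printing Implicit Defensive.
Import Order.TTheory GRing.Theory Num.Theory.

Definition boolfun (n : nat) := {ffun 'I_n -> bool} -> bool.

Definition omega (m : nat) : nat := size (primes m).

(* The gate MOD_m^A applied to (the values of) a list of input wires
   (multiplicities allowed); A is a predicate on nat, only its restriction
   to {0,...,m-1} matters. *)
Definition modgate (m : nat) (A : pred nat) (s : seq bool) : bool :=
  ((\sum_(b <- s) (b : nat)) %% m) \in A.

(* Circuits are unfolded into formulas, which
   does not change computed functions nor depth. *)
Fixpoint CC (m h n : nat) (f : boolfun n) {struct h} : Prop :=
  match h with
  | 0 => (exists b : bool, forall x, f x = b) \/ (exists i : 'I_n, forall x, f x = x i)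
  | h'.+1 => CC m h' f \/
      exists (A : pred nat) (gs : seq (boolfun n)),
        (forall k : nat, (k < size gs)%N -> CC m h' (nth (fun _ => false) gs k)) /\
        forall x, f x = modgate m A [seq g x | g <- gs]
  end.

Definition AND_fun (n : nat) : boolfun n := fun x => [forall i, x i].

Definition nonconstant (n : nat) (f : boolfun n) : Prop :=
  exists x y, f x != f y.

Local Open Scope ring_scope.
Definition bal (n : nat) (f : boolfun n) : rat :=
  1 - `| (#|[pred x | ~~ f x]|%:R : rat) - #|[pred x | f x]|%:R | / 2 ^+ n.

From mathcomp Require Import all_boot all_order all_algebra.
From mathcomp Require Import zify ring.
Import Order.TTheory GRing.Theory Num.Theory.
Set Implicit Arguments. Unset Strict Implicit. Unset Printing Implicit Defensive.

(* If a preimage [f^-1(t)] had fewer than [2^(n-c)] points, halving it repeatedly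
   along a coordinate on which it is not constant would leave a subcube of dimension
   [d > c] meeting it in a single point [p].  Substituting literals for the variables
   maps [{0,1}^d] onto that subcube, sending the all-ones vector to [p], so that
   [f (s z) == t] is [AND_d].  Substituting literals keeps a function in CC^h[m]
   (a negated literal is [m - 1] copies of the variable plus a constant [1], modulo
   [m]), and so does negating the output of a top gate; the functions without a top
   gate are constants and projections, which are handled by counting.  Hence both
   preimages have at least [2^(n-c)] points, and
   [bal f = 2 min(|f^-1(0)|, |f^-1(1)|) / 2^n >= 2^(1-c)]. *)

Definition literal_map n d (s : {ffun 'I_d -> bool} -> {ffun 'I_n -> bool}) : Prop :=
  forall i, (exists b, forall z, s z i = b) \/ (exists j b, forall z, s z i = (z j == b)).

Section Circuits.

Variable m : nat.

Lemma CC_const h n (b : bool) : CC m h (fun _ : {ffun 'I_n -> bool} => b).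
Proof. by elim: h => [|h IH] /=; [left; exists b | left]. Qed.

Lemma CC_ext h n (f g : boolfun n) : f =1 g -> CC m h f -> CC m h g.
Proof.
elim: h f g => [|h IH] f g fg /=.
  by case=> [[b fb]|[i fi]]; [left; exists b | right; exists i] => x; rewrite -fg.
case=> [Hf|[A [gs [Hgs Hf]]]]; first by left; exact: IH fg Hf.
by right; exists A, gs; split=> // x; rewrite -fg.
Qed.

Lemma CC_mono h1 h2 n (f : boolfun n) : (h1 <= h2)%N -> CC m h1 f -> CC m h2 f.
Proof.
elim: h2 => [|h2 IH]; first by rewrite leqn0 => /eqP ->.
by rewrite leq_eqVlt => /orP [/eqP -> //|/IH Hf /Hf]; left.
Qed.

Definition CC_gate h n (f : boolfun n) : Prop :=
  exists A (gs : seq (boolfun n)),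
    (forall k, (k < size gs)%N -> CC m h (nth (fun _ => false) gs k)) /\
    forall x, f x = modgate m A [seq g x | g <- gs].

Lemma CC_cases h n (f : boolfun n) : CC m h f ->
  [\/ exists b, forall x, f x = b, exists i, forall x, f x = x i
    | exists2 h', (h' < h)%N & CC_gate h' f].
Proof.
elim: h f => [|h IH] f /=; first by case=> ?; [apply: Or31 | apply: Or32].
case=> [/IH [? | ? | [h' lt_h'h gate]]|gate]; [exact: Or31 | exact: Or32 | |].
- by apply: Or33; exists h'; first exact: ltnW.
- by apply: Or33; exists h.
Qed.

Definition all_CC h d (gs : seq (boolfun d)) : Prop :=
  forall k, CC m h (nth (fun _ => false) gs k).

Lemma all_CC1 h d (g : boolfun d) : CC m h g -> all_CC h [:: g].
Proof. by move=> Hg [|k] //=; rewrite nth_nil; apply: CC_const. Qed.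

Lemma all_CC_nseq h d k (g : boolfun d) : CC m h g -> all_CC h (nseq k g).
Proof. by move=> Hg j; rewrite nth_nseq; case: ifP => // _; apply: CC_const. Qed.

Lemma all_CC_cat h d (gs1 gs2 : seq (boolfun d)) :
  all_CC h gs1 -> all_CC h gs2 -> all_CC h (gs1 ++ gs2).
Proof. by move=> H1 H2 k; rewrite nth_cat; case: ifP. Qed.

Definition CC_modsum h d (F : {ffun 'I_d -> bool} -> nat) : Prop :=
  exists2 gs : seq (boolfun d), all_CC h gs &
    forall z, F z = \sum_(g <- gs) (g z : nat) %[mod m].

Lemma CC_modsum_mono h1 h2 d (F : {ffun 'I_d -> bool} -> nat) :
  (h1 <= h2)%N -> CC_modsum h1 F -> CC_modsum h2 F.
Proof. by move=> le [gs Hgs E]; exists gs => // k; exact: CC_mono le (Hgs k). Qed.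

Lemma CC_modsum_add h d (F1 F2 : {ffun 'I_d -> bool} -> nat) :
  CC_modsum h F1 -> CC_modsum h F2 -> CC_modsum h (fun z => F1 z + F2 z).
Proof.
move=> [gs1 H1 E1] [gs2 H2 E2]; exists (gs1 ++ gs2); first exact: all_CC_cat.
by move=> z; rewrite big_cat /= -modnDm E1 E2 modnDm.
Qed.

Section Restriction.

Hypothesis m_gt0 : (0 < m)%N.
Variables (n d : nat) (s : {ffun 'I_d -> bool} -> {ffun 'I_n -> bool}).
Hypothesis s_literal : literal_map s.

Lemma CC_modsum_coord i : CC_modsum 0 (fun z => s z i).
Proof.
case: (s_literal i) => [[b sb]|[j [[] sj]]].
- exists [:: fun _ => b] => [|z]; first by apply/all_CC1/CC_const.
  by rewrite big_seq1 sb.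
- exists [:: fun z : {ffun _ -> bool} => z j] => [|z]; first by apply: all_CC1; right; exists j.
  by rewrite big_seq1 sj eqb_id.
- exists (nseq m.-1 (fun z : {ffun _ -> bool} => z j) ++ [:: fun _ => true]) => [|z].
    apply: all_CC_cat; last by apply/all_CC1/CC_const.
    by apply: all_CC_nseq; right; exists j.
  rewrite big_cat big_seq1 big_nseq iter_addn sj.
  by case: (z j) => /=; rewrite ?mul1n addn0 addn1 ?prednK ?modnn // mod0n.
Qed.

Lemma CC_modsum_big h (gs : seq (boolfun n)) :
  (forall k, (k < size gs)%N -> CC_modsum h (fun z => nth (fun _ => false) gs k (s z))) ->
  CC_modsum h (fun z => \sum_(g <- gs) (g (s z) : nat)).
Proof.
elim: gs => [|g gs IH] Hgs.
  by exists [::] => [k|z]; rewrite ?nth_nil ?big_nil //; apply: CC_const.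
have [gs' Hgs' E] := CC_modsum_add (Hgs 0%N erefl) (IH (fun k => Hgs k.+1)).
by exists gs' => // z; rewrite big_cons E.
Qed.

Lemma CC_gate_restrict_of_modsum h (f : boolfun n) (b : bool) :
  (forall g, CC m h g -> CC_modsum h (fun z => g (s z))) ->
  CC_gate h f -> CC m h.+1 (fun z => b (+) f (s z)).
Proof.
move=> restrict [A [gs [Hgs Hf]]]; right.
have [L HL E] := CC_modsum_big (fun k lt_k => restrict _ (Hgs k lt_k)).
exists (fun k => b (+) (k \in A)), L; split=> [k _|z]; first exact: HL.
by rewrite Hf /modgate !big_map E.
Qed.

Lemma CC_modsum_restrict h (f : boolfun n) : CC m h f -> CC_modsum h (fun z => f (s z)).
Proof.
elim: h f => [|h IH] f /=.
  case=> [[b fb]|[i fi]].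
    exists [:: fun _ => b] => [|z]; first exact/all_CC1/CC_const.
    by rewrite big_seq1 fb.
  by have [gs Hgs E] := CC_modsum_coord i; exists gs => // z; rewrite fi.
case=> [Hf|gate]; first exact: CC_modsum_mono (IH f Hf).
exists [:: fun z => f (s z)] => [|z]; last by rewrite big_seq1.
exact/all_CC1/(CC_gate_restrict_of_modsum false IH gate).
Qed.

Lemma CC_gate_restrict h (f : boolfun n) (b : bool) :
  CC_gate h f -> CC m h.+1 (fun z => b (+) f (s z)).
Proof. exact/CC_gate_restrict_of_modsum/CC_modsum_restrict. Qed.

End Restriction.

End Circuits.

Section Subcubes.

Variable n : nat.
Implicit Types (S : {set {ffun 'I_n -> bool}}) (F : {set 'I_n}) (x y z p : {ffun 'I_n -> bool}).

Definition agree_off F x y : Prop := forall i, i \notin F -> x i = y i.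

Lemma small_half S x y i : x \in S -> y \in S -> x i != y i ->
  exists b, (0 < #|[set z in S | z i == b]|)%N /\ (#|[set z in S | z i == b]|.*2 <= #|S|)%N.
Proof.
move=> xS yS xy.
have nonempty b : (0 < #|[set z in S | z i == b]|)%N.
  apply/card_gt0P; have [xb|xb] := eqVneq (x i) b; [exists x | exists y].
    by rewrite inE xS; apply/eqP.
  by rewrite inE yS; move: xy xb; case: (x i) (y i) b => [] [] [].
have halves : (#|[set z in S | z i == true]| + #|[set z in S | z i == false]| = #|S|)%N.
  rewrite -(cardsID [set z : {ffun _ -> bool} | z i] S); congr (_ + _); apply: eq_card => z;
    by rewrite !inE ?eqb_id ?eqbF_neg // andbC.
have [le|lt] := leqP #|[set z in S | z i == true]| #|[set z in S | z i == false]|.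
  by exists true; split; [apply: nonempty | lia].
by exists false; split; [apply: nonempty | lia].
Qed.

Lemma isolating_subcube c F S :
  {in S &, forall x y, agree_off F x y} -> (0 < #|S|)%N -> (#|S| * 2 ^ c < 2 ^ #|F|)%N ->
  exists F' p, [/\ F' \subset F, (c < #|F'|)%N, p \in S &
    {in S, forall z, agree_off F' z p -> z = p}].
Proof.
move: {2}#|F| (erefl #|F|) => k; elim: k F S => [|k IH] F S cardF agreeS S_gt0 small.
  by move: small; rewrite cardF expn0; have := expn_gt0 2 c; nia.
have [S_le1|/card_gt1P [x [y [xS yS xy]]]] := leqP #|S| 1.
  have /cards1P [p S_p] : #|S| == 1%N by rewrite eqn_leq S_le1 S_gt0.
  move: small; rewrite S_p cards1 mul1n ltn_exp2l // => cF.
  by exists F, p; split=> // [|z]; rewrite ?S_p inE // => /eqP.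
have [i xyi] : exists i, x i != y i.
  apply/existsP; apply: contra_neqT xy => /existsPn same.
  by apply/ffunP => i; apply/eqP/negPn/same.
have iF : i \in F by apply: contraTT xyi => /(agreeS x y xS yS i) x_y; apply/negPn/eqP.
have [b [Sb_gt0 Sb_half]] := small_half xS yS xyi.
have cardFi : #|F :\ i| = k by move: cardF; rewrite (cardsD1 i F) iF add1n => -[].
have agreeSb : {in [set z in S | z i == b] &, forall u v, agree_off (F :\ i) u v}.
  move=> u v; rewrite !inE => /andP [uS /eqP ub] /andP [vS /eqP vb] j.
  rewrite in_setD1 negb_and negbK => /orP [/eqP -> | jF]; first by rewrite ub vb.
  exact: agreeS.
have smallb : (#|[set z in S | z i == b]| * 2 ^ c < 2 ^ #|F :\ i|)%N.
  by move: small; rewrite cardF cardFi expnS; nia.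
have [F' [p [F'Fi cF' pSb isolated]]] := IH _ _ cardFi agreeSb Sb_gt0 smallb.
have iF' : i \notin F' by apply/negP => /(subsetP F'Fi); rewrite setD11.
move: pSb; rewrite inE => /andP [pS /eqP pb].
exists F', p; split=> //; first exact: subset_trans F'Fi (subD1set F i).
by move=> z zS zp; apply: isolated (zp); rewrite inE zS (zp i iF') pb eqxx.
Qed.

End Subcubes.

Lemma AND_of_isolated_point n (F : {set 'I_n}) (S : {set {ffun 'I_n -> bool}}) p :
  (0 < #|F|)%N -> p \in S -> {in S, forall z, agree_off F z p -> z = p} ->
  exists2 s : {ffun 'I_#|F| -> bool} -> {ffun 'I_n -> bool},
    literal_map s & forall z, (s z \in S) = AND_fun z.
Proof.
move=> /card_gt0P [i0 i0F] pS isolated.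
(* A variable set to [true] keeps the coordinate of [p], so [s z = p] iff [z] is all ones. *)
pose s z := [ffun i => if i \in F then z (enum_rank_in i0F i) == p i else p i].
exists s => [i|z].
  have [iF|iF] := boolP (i \in F); [right; exists (enum_rank_in i0F i), (p i) | left; exists (p i)];
    by move=> z; rewrite ffunE ?iF ?(negbTE iF).
have s_p : (s z == p) = AND_fun z.
  apply/eqP/forallP => [/ffunP s_eq_p j | all_z].
    by have := s_eq_p (enum_val j); rewrite ffunE enum_valP enum_valK_in; case: (z j) (p _) => [] [].
  by apply/ffunP => i; rewrite ffunE; case: ifP => // _; rewrite all_z; case: (p i).
rewrite -s_p; apply/idP/eqP => [sS|->//]; apply: isolated sS _ => i iF.
by rewrite ffunE (negbTE iF).
Qed.

Lemma card_coord_eq n (i : 'I_n) (b : bool) :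
  (#|[set x : {ffun 'I_n -> bool} | x i == b]|.*2 = 2 ^ n)%N.
Proof.
pose T := {ffun 'I_n -> bool}.
pose flip (x : T) : T := [ffun j => if j == i then ~~ x j else x j].
have flipK : involutive flip.
  by move=> x; apply/ffunP => j; rewrite !ffunE; case: (j == i); rewrite ?negbK.
have flip_half : #|[set x : T | x i == b]| = #|[set x : T | x i == ~~ b]|.
  rewrite -(card_imset _ (can_inj flipK)) (can2_imset_pre _ flipK flipK).
  by apply: eq_card => x; rewrite !inE ffunE eqxx; case: (x i) b => [] [].
have -> : (2 ^ n)%N = #|T| by rewrite card_ffun card_bool card_ord.
rewrite -addnn {2}flip_half -(cardsC [set x : T | x i == b]) {flip_half}.
by congr (_ + _); apply: eq_card => x; rewrite !inE; case: (x i); case: b.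
Qed.

Lemma CC_preimage_large m h c n (f : boolfun n) (t : bool) :
  (0 < m)%N -> (0 < c)%N -> (forall d, (c < d)%N -> ~ CC m h (@AND_fun d)) -> CC m h f ->
  (0 < #|[set x | f x == t]|)%N -> (2 ^ n <= #|[set x | f x == t]| * 2 ^ c)%N.
Proof.
move=> m_gt0 c_gt0 noAND Hf /[dup] /card_gt0P [x0 fx0] St_gt0.
rewrite leqNgt; apply/negP => small.
have two_le_2c : (2 <= 2 ^ c)%N by rewrite -{1}(expn1 2) leq_exp2l.
case: (CC_cases Hf) => [[b fb]|[i fi]|[h' lt_h'h gate]].
- have St : [set x | f x == t] = setT.
    by apply/setP => x; move: fx0; rewrite !inE !fb.
  by move: small; rewrite St cardsT card_ffun card_bool card_ord; nia.
- have := card_coord_eq i t; rewrite (eq_card (B := [set x | f x == t])) => [|x].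
    by move: small; nia.
  by rewrite !inE fi.
have agreeT : {in [set x | f x == t] &, forall x y, agree_off setT x y}.
  by move=> x y _ _ i; rewrite inE.
rewrite -[in X in (_ < X)%N](card_ord n) -cardsT in small.
have [F [p [_ cF pS isolated]]] := isolating_subcube agreeT St_gt0 small.
have [s s_lit sAND] := AND_of_isolated_point (leq_ltn_trans (leq0n c) cF) pS isolated.
apply: (noAND _ cF); apply: CC_mono lt_h'h (CC_ext _ (CC_gate_restrict m_gt0 s_lit (~~ t) gate)).
by move=> z; rewrite -sAND inE addNb negb_add eq_sym.
Qed.

Local Open Scope ring_scope.

Lemma bal_minn n (f : boolfun n) :
  bal f = 2 * (minn #|[set x | f x == false]| #|[set x | f x == true]|)%:R / 2 ^+ n.
Proof.
rewrite /bal; set a := #|[set x | f x == false]|; set b := #|[set x | f x == true]|.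
have -> : #|[pred x | ~~ f x]| = a by apply: eq_card => x; rewrite !inE eqbF_neg.
have -> : #|[pred x | f x]| = b by apply: eq_card => x; rewrite !inE eqb_id.
have ab : a%:R + b%:R = 2 ^+ n :> rat.
  rewrite -natrD -natrX -(card_ord n) -card_bool -card_ffun -(cardsC [set x | f x == false]).
  by congr (_ + _)%:R; apply: eq_card => x; rewrite !inE; case: (f x).
rewrite -ab; have ab_neq0 : a%:R + b%:R != 0 :> rat by rewrite ab expf_neq0.
have [le_ab|lt_ba] := leqP a b.
  by rewrite ler0_norm ?subr_le0 ?ler_nat // opprB; field.
by rewrite ger0_norm ?subr_ge0 ?ler_nat 1?ltnW //; field.
Qed.

Lemma exp2z_le_ratio (c n k : nat) :
  (2 ^ n <= k * 2 ^ c)%N -> (2 : rat) ^ (1 - c%:Z) <= 2 * k%:R / 2 ^+ n.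
Proof.
move=> le_2n; rewrite expfzDr // expr1z -exprnN -mulrA ler_pM2l //.
rewrite ler_pdivlMr ?exprn_gt0 // mulrC ler_pdivrMr ?exprn_gt0 //.
by rewrite -!natrX -natrM ler_nat.
Qed.

Theorem corollary2p4 (h m c : nat) :
  (0 < h)%N -> (0 < m)%N -> (h = 1%N \/ omega m = 1%N) -> (0 < c)%N ->
  (forall n : nat, (c < n)%N -> ~ CC m h (@AND_fun n)) ->
  forall (n : nat) (f : boolfun n), CC m h f -> nonconstant f ->
    (2 : rat) ^ (1 - c%:Z) <= bal f.
Proof.
move=> _ m_gt0 _ c_gt0 noAND n f Hf [x [y fxy]].
have large t : (2 ^ n <= #|[set z | f z == t]| * 2 ^ c)%N.
  apply: CC_preimage_large m_gt0 c_gt0 noAND Hf _; apply/card_gt0P.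
  have [fx|fx] := eqVneq (f x) t; [exists x | exists y]; rewrite inE ?fx //.
  by move: fxy fx; case: (f x) (f y) t => [] [] [].
by rewrite bal_minn; apply: exp2z_le_ratio; rewrite minnMl leq_min !large.
Qed.
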